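(* For every $L\ge k_1+4\epsilon$ there is a number $\kappa(L)$ such that for all vertices $a,b$ of $\mathcal{CG}(\Sigma)$ with $d(a,b)\le 3L$, the pair $(a,b)$ has at most $\kappa(L)$ distinct $L$-channels.
   Context: $\Sigma$ is a compact orientable surface, $\mathcal{CG}(\Sigma)$ its curve graph (1-skeleton of Harvey's curve complex) with path metric $d$ (edges of length 1); $\delta\in\mathbb{N}$ is a hyperbolicity constant for it. Tight geodesics are those of Masur–Minsky/Bowditch. $\lambda=1000\delta$ and $\epsilon$ is a positive integer such that any $\lambda$-quasi-geodesic in $\mathcal{CG}(\Sigma)$ stays within $\epsilon$ of any geodesic joining its endpoints. Bowditch's constant $k_1$ (depending only on $\Sigma$) is such that, for some $K_1$ depending only on $\Sigma$: if $a,b$ are vertices, $r\in\mathbb{N}$, and $c$ lies on a tight geodesic from $a$ to $b$ with $d(a,c)\ge r+k_1$ and $d(b,c)\ge r+k_1$, then the set of vertices on tight geodesics between two points respectively $r$-close to $a$ and $b$, at distance at most $2\epsilon$ from $c$, has at most $K_1$ elements. Definition: for $L>0$ and vertices $a,b$ with $d(a,b)\le 3L$, an $L$-channel of $(a,b)$ is a tight geodesic $g_1$ of length $L$ which is contained in a tight geodesic $g_2$ of length $3L$ that starts at distance at most $2\epsilon$ from $a$ and ends at distance at most $2\epsilon$ from $b$, such that the endpoints of $g_2$ are at distance $L$ from $g_1$. *)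

(* Abstract setting: the curve graph CG(Sigma) is modelled as a
   graph (V, adj) with path metric d, together with a predicate [tight] on
   vertex sequences (the tight geodesics), satisfying the standing facts of the
   context (hyperbolicity, the quasi-geodesic stability constant epsilon,
   Bowditch's finiteness constant k1/K1). *)
From Stdlib Require Import List Arith Lia.
Import ListNotations.
Set Implicit Arguments.

Section Defs.
Variable V : Type.

Definition absdiff (i j : nat) : nat := (i - j) + (j - i).

Fixpoint walk (adj : V -> V -> Prop) (l : list V) : Prop :=
  match l with
  | x :: ((y :: _) as t) => adj x y /\ walk adj t
  | _ => True
  end.

Definition starts (l : list V) (x : V) : Prop := hd_error l = Some x.
Definition ends (l : list V) (y : V) : Prop := hd_error (rev l) = Some y.

(* [d] is the path metric of the graph (edges of length 1); in particular
   the graph is connected. A path with k+1 vertices has length k. *)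
Definition is_path_metric (adj : V -> V -> Prop) (d : V -> V -> nat) : Prop :=
  (forall x y, adj x y <-> adj y x) /\ (forall x, ~ adj x x) /\
  forall x y n, d x y <= n <->
    exists l, walk adj l /\ starts l x /\ ends l y /\ length l <= S n.

Definition geodesic (d : V -> V -> nat) (l : list V) : Prop :=
  l <> [] /\ forall i j x y, nth_error l i = Some x -> nth_error l j = Some y ->
    d x y = absdiff i j.

Definition geod_from_to (d : V -> V -> nat) (l : list V) (x y : V) : Prop :=
  geodesic d l /\ starts l x /\ ends l y.

Definition hyperbolic (d : V -> V -> nat) (delta : nat) : Prop :=
  forall x y z g1 g2 g3,
    geod_from_to d g1 x y -> geod_from_to d g2 y z -> geod_from_to d g3 z x ->
    forall v, In v g1 -> exists w, (In w g2 \/ In w g3) /\ d v w <= delta.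

(* lambda-quasi-geodesic, parametrized by {0,...,n}:
   (1/lam)|i-j| - lam <= d(q_i,q_j) <= lam|i-j| + lam *)
Definition quasi_geodesic (d : V -> V -> nat) (lam : nat) (q : list V) : Prop :=
  q <> [] /\ forall i j x y, nth_error q i = Some x -> nth_error q j = Some y ->
    d x y <= lam * absdiff i j + lam /\ absdiff i j <= lam * d x y + lam * lam.

Definition qg_stability (d : V -> V -> nat) (lam eps : nat) : Prop :=
  forall q g x y, quasi_geodesic d lam q -> starts q x -> ends q y ->
    geod_from_to d g x y ->
    forall v, In v q -> exists w, In w g /\ d v w <= eps.

Definition tight_from_to (d : V -> V -> nat) (tight : list V -> Prop)
  (l : list V) (x y : V) : Prop := tight l /\ geod_from_to d l x y.

Definition tight_basic (d : V -> V -> nat) (tight : list V -> Prop) : Prop :=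
  (forall l, tight l -> geodesic d l) /\
  (forall x y, exists l, tight_from_to d tight l x y) /\
  (forall l, tight l -> tight (rev l)) /\
  (forall l1 l2 l3, tight (l1 ++ l2 ++ l3) -> l2 <> [] -> tight l2).

Definition bowditch_property (d : V -> V -> nat) (tight : list V -> Prop)
  (eps k1 K1 : nat) : Prop :=
  forall a b c (r : nat),
    (exists g, tight_from_to d tight g a b /\ In c g) ->
    r + k1 <= d a c -> r + k1 <= d b c ->
    forall S : list V, NoDup S ->
      (forall v, In v S -> d v c <= 2 * eps /\
         exists a' b' g', d a a' <= r /\ d b b' <= r /\
           tight_from_to d tight g' a' b' /\ In v g') ->
      length S <= K1.

Definition dist_to_path (d : V -> V -> nat) (x : V) (g : list V) (n : nat) : Prop :=
  (forall v, In v g -> n <= d x v) /\ (exists v, In v g /\ d x v = n).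

Definition channel (d : V -> V -> nat) (tight : list V -> Prop) (eps L : nat)
  (a b : V) (g1 : list V) : Prop :=
  tight g1 /\ length g1 = S L /\
  exists g2 x y, tight_from_to d tight g2 x y /\ length g2 = S (3 * L) /\
    d x a <= 2 * eps /\ d y b <= 2 * eps /\
    (forall v, In v g1 -> In v g2) /\
    dist_to_path d x g1 L /\ dist_to_path d y g1 L.

End Defs.

(* Fix a tight geodesic [g] from [a] to [b].  A vertex [v] of an [L]-channel lies on a
   geodesic [g2] of length [3L] at distance at least [L] from both ends of [g2], whose ends
   are [2 eps]-close to [a] and [b]; thinness of the quadrilateral spanned by [g2] and [g]
   puts [v] within [2 delta] of [g], hence within [2 eps] of a point [c] of [g] at distance
   at least [2 eps + k1] from [a] and [b] ([2 delta <= eps] follows from quasi-geodesic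
   stability).  By Bowditch's property with [r = 2 eps], each of the at most [3L + 1]
   points [c] of [g] accounts for at most [K1] such vertices.  So all channels together use
   at most [(3L + 1) K1] vertices, and a channel is a sequence of [L + 1] of them. *)

From Stdlib Require Import List Arith Lia ClassicalEpsilon.
Import ListNotations.

Fixpoint words {A} (U : list A) (k : nat) : list (list A) :=
  match k with
  | 0 => [[]]
  | S k => flat_map (fun x => map (cons x) (words U k)) U
  end.

Lemma length_words {A} (U : list A) k : length (words U k) = length U ^ k.
Proof.
  induction k as [|k IH]; [reflexivity|].
  simpl words. rewrite Nat.pow_succ_r', <- IH.
  apply flat_map_constant_length. intros x _. apply length_map.
Qed.

Lemma in_words {A} (U : list A) k w :
  length w = k -> incl w U -> In w (words U k).
Proof.
  revert w; induction k as [|k IH]; intros [|x w] Hl Hw; simpl in *; try discriminate.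
  - left; reflexivity.
  - apply in_flat_map. exists x. split; [apply Hw; left; reflexivity|].
    apply in_map, IH; [congruence|]. intros y Hy; apply Hw; right; exact Hy.
Qed.

Lemma NoDup_words_length_le {A} (U : list A) k (ws : list (list A)) :
  NoDup ws -> (forall w, In w ws -> length w = k /\ incl w U) ->
  length ws <= length U ^ k.
Proof.
  intros Hnd Hws. rewrite <- length_words. apply NoDup_incl_length; [exact Hnd|].
  intros w Hw. destruct (Hws w Hw). apply in_words; assumption.
Qed.

Lemma NoDup_length_le_cover {A B} (P : B -> A -> Prop) (cs : list B) K (U : list A) :
  NoDup U -> (forall v, In v U -> exists c, In c cs /\ P c v) ->
  (forall c S, In c cs -> NoDup S -> (forall v, In v S -> P c v) -> length S <= K) ->
  length U <= length cs * K.
Proof.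
  revert U; induction cs as [|c cs IH]; intros U Hnd Hcov HK.
  - destruct U as [|v U]; [reflexivity|].
    destruct (Hcov v (or_introl eq_refl)) as [c [[] _]].
  - set (f := fun v => if excluded_middle_informative (P c v) then true else false).
    rewrite <- (filter_length f U). simpl.
    apply Nat.add_le_mono.
    + apply (HK c); [left; reflexivity|apply NoDup_filter, Hnd|].
      intros v Hv. apply filter_In in Hv. unfold f in Hv.
      destruct (excluded_middle_informative (P c v)); [assumption|discriminate (proj2 Hv)].
    + apply IH; [apply NoDup_filter, Hnd| |].
      * intros v Hv. apply filter_In in Hv. destruct Hv as [Hv Hf].
        destruct (Hcov v Hv) as [c' [[<-|Hc'] Hp]]; [|exists c'; auto].
        unfold f in Hf. destruct (excluded_middle_informative (P c v)); easy.
      * intros c' S Hc'. apply HK. right; exact Hc'.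
Qed.

Section Walks.
Context {V : Type} {adj : V -> V -> Prop}.

Lemma walk_app (l1 : list V) x l2 :
  walk adj (l1 ++ x :: l2) <-> walk adj (l1 ++ [x]) /\ walk adj (x :: l2).
Proof.
  induction l1 as [|a [|b l1] IH]; simpl in *; [tauto|tauto|].
  rewrite IH. tauto.
Qed.

Lemma walk_rev (l : list V) :
  (forall x y, adj x y -> adj y x) -> walk adj l -> walk adj (rev l).
Proof.
  intros Hs. induction l as [|a [|b l] IH]; intros Hw; [exact I|exact I|].
  destruct Hw as [Hab Hw].
  change (rev (a :: b :: l)) with ((rev l ++ [b]) ++ [a]).
  rewrite <- app_assoc. apply walk_app.
  split; [exact (IH Hw)|]. simpl. auto.
Qed.

End Walks.

Lemma starts_nth {V} (l : list V) x : starts l x <-> nth_error l 0 = Some x.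
Proof. destruct l; reflexivity. Qed.

Lemma ends_nth {V} (l : list V) y :
  ends l y <-> l <> [] /\ nth_error l (length l - 1) = Some y.
Proof.
  destruct l as [|z l] using rev_ind; [split; [discriminate|tauto]|].
  unfold ends. rewrite rev_app_distr, length_app, Nat.add_sub, nth_error_app2, Nat.sub_diag
    by lia.
  split; [|tauto]. intros Hy. split; [|exact Hy].
  intro Hc; apply app_eq_nil in Hc; destruct Hc; discriminate.
Qed.

Section Geodesics.
Context {V : Type} {d : V -> V -> nat}.

Lemma geod_nth l x y i v :
  geod_from_to d l x y -> nth_error l i = Some v ->
  d x v = i /\ d v y = length l - 1 - i /\ d x y = length l - 1 /\ i < length l.
Proof.
  intros [[_ Hg] [Hx Hy]] Hi.
  rewrite starts_nth in Hx. rewrite ends_nth in Hy. destruct Hy as [_ Hy].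
  assert (i < length l) by (apply nth_error_Some; congruence).
  rewrite (Hg _ _ _ _ Hx Hi), (Hg _ _ _ _ Hi Hy), (Hg _ _ _ _ Hx Hy).
  unfold absdiff. repeat split; lia.
Qed.

Lemma geod_dist l x y : geod_from_to d l x y -> d x y = length l - 1.
Proof.
  intros Hl. assert (Hx : nth_error l 0 = Some x) by apply starts_nth, (proj1 (proj2 Hl)).
  destruct (geod_nth _ _ _ _ _ Hl Hx) as [_ [_ [Hxy _]]]. exact Hxy.
Qed.

Lemma geod_dist_start_le l x y v : geod_from_to d l x y -> In v l -> d x v <= d x y.
Proof.
  intros Hl Hv. destruct (In_nth_error _ _ Hv) as [i Hi].
  destruct (geod_nth _ _ _ _ _ Hl Hi) as [? [_ [? ?]]]. lia.
Qed.

Definition round_trip (l : list V) (x0 : V) (m : nat) : list V :=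
  map (fun i => nth (m - absdiff i m) l x0) (seq 0 (S (2 * m))).

Lemma nth_error_round_trip l x0 m i :
  i <= 2 * m -> nth_error (round_trip l x0 m) i = Some (nth (m - absdiff i m) l x0).
Proof.
  intros Hi. unfold round_trip. rewrite nth_error_map, nth_error_seq.
  destruct (Nat.ltb_spec i (S (2 * m))); [reflexivity|lia].
Qed.

Lemma length_round_trip l x0 m : length (round_trip l x0 m) = S (2 * m).
Proof. unfold round_trip. rewrite length_map, length_seq. reflexivity. Qed.

Lemma round_trip_quasi_geodesic l x0 m lam :
  geodesic d l -> m < length l -> 1 <= lam -> 2 * m <= lam * lam ->
  quasi_geodesic d lam (round_trip l x0 m).
Proof.
  intros [_ Hg] Hm Hlam Hm2.
  split; [unfold round_trip; simpl; discriminate|].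
  intros i j x y Hi Hj.
  pose proof (length_round_trip l x0 m).
  assert (i < length (round_trip l x0 m)) by (apply nth_error_Some; congruence).
  assert (j < length (round_trip l x0 m)) by (apply nth_error_Some; congruence).
  rewrite nth_error_round_trip in Hi, Hj by lia.
  injection Hi as <-. injection Hj as <-.
  rewrite (Hg _ _ _ _ (nth_error_nth' l (n := m - absdiff i m) x0 ltac:(unfold absdiff; lia))
                      (nth_error_nth' l (n := m - absdiff j m) x0 ltac:(unfold absdiff; lia))).
  unfold absdiff in *. split; nia.
Qed.

End Geodesics.

Section PathMetric.
Context {V : Type} {adj : V -> V -> Prop} {d : V -> V -> nat}.
Hypothesis Hd : is_path_metric adj d.

Lemma dist_walk x y :
  exists l, walk adj l /\ starts l x /\ ends l y /\ length l <= S (d x y).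
Proof. apply (proj2 (proj2 Hd)), le_n. Qed.

Lemma dist_le_walk x y n l :
  walk adj l -> starts l x -> ends l y -> length l <= S n -> d x y <= n.
Proof. intros. apply (proj2 (proj2 Hd)). exists l; auto. Qed.

Lemma dist_refl x : d x x = 0.
Proof.
  enough (d x x <= 0) by lia.
  apply dist_le_walk with [x]; simpl; auto; reflexivity.
Qed.

Lemma dist_sym x y : d x y = d y x.
Proof.
  enough (H : forall x y, d y x <= d x y) by (pose proof (H x y); pose proof (H y x); lia).
  clear x y; intros x y.
  destruct (dist_walk x y) as [l [Hw [Hx [Hy Hl]]]].
  apply dist_le_walk with (rev l).
  - apply walk_rev; [apply (proj1 Hd)|exact Hw].
  - unfold starts, ends in *. exact Hy.
  - unfold starts, ends in *. rewrite rev_involutive. exact Hx.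
  - rewrite length_rev. exact Hl.
Qed.

Lemma dist_triangle x y z : d x z <= d x y + d y z.
Proof.
  destruct (dist_walk x y) as [l1 [Hw1 [Hx1 [Hy1 Hl1]]]].
  destruct (dist_walk y z) as [[|y' l2] [Hw2 [Hy2 [Hz2 Hl2]]]]; [discriminate|].
  injection Hy2 as ->.
  destruct l1 as [|y1 l1] using rev_ind; [discriminate|]. clear IHl1.
  unfold ends in Hy1. rewrite rev_app_distr in Hy1. injection Hy1 as ->.
  apply dist_le_walk with (l1 ++ y :: l2).
  - apply walk_app. auto.
  - destruct l1; exact Hx1.
  - unfold ends in *. rewrite rev_app_distr. destruct (rev (y :: l2)); [discriminate|exact Hz2].
  - rewrite length_app in *. simpl in *. lia.
Qed.

Lemma geod_far_point l a b u r s :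
  geod_from_to d l a b -> In u l ->
  r <= d a u + s -> r <= d b u + s -> 2 * r <= d a b ->
  exists c, In c l /\ r <= d a c /\ r <= d b c /\ d u c <= s.
Proof.
  intros Hl Hu Hau Hbu Hab. destruct (In_nth_error _ _ Hu) as [i Hi].
  destruct (geod_nth _ _ _ _ _ Hl Hi) as [Hai [Hib [Hn Hil]]].
  rewrite (dist_sym b u) in Hbu.
  set (n := length l - 1) in *.
  set (p := Nat.max r (Nat.min i (n - r))).
  assert (Hp : p < length l) by lia.
  destruct (nth_error (A := V) l p) as [c|] eqn:Hc; [|apply nth_error_None in Hc; lia].
  destruct (geod_nth _ _ _ _ _ Hl Hc) as [Hac [Hcb _]].
  exists c. rewrite (dist_sym b c), (proj2 (proj1 Hl) _ _ _ _ Hi Hc).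
  split; [apply nth_error_In with p; exact Hc|]. unfold absdiff, p in *. lia.
Qed.

Lemma geod_quadrilateral_thin delta m x y a b g2 g v :
  hyperbolic d delta -> (forall p q, exists l, geod_from_to d l p q) ->
  geod_from_to d g2 x y -> geod_from_to d g a b -> In v g2 ->
  d x a <= m -> d y b <= m -> m + delta < d y v -> m + 2 * delta < d x v ->
  exists u, In u g /\ d v u <= 2 * delta.
Proof.
  intros Hhyp Hgeod Hg2 Hg Hv Hxa Hyb Hyv Hxv.
  destruct (Hgeod y b) as [gyb Hgyb].
  destruct (Hgeod b x) as [gbx Hgbx].
  destruct (Hgeod x a) as [gxa Hgxa].
  destruct (Hhyp _ _ _ _ _ _ Hg2 Hgyb Hgbx v Hv) as [w [[Hw|Hw] Hvw]].
  - pose proof (geod_dist_start_le _ _ _ _ Hgyb Hw).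
    pose proof (dist_triangle y w v). rewrite (dist_sym w v) in *. lia.
  - destruct (Hhyp _ _ _ _ _ _ Hgbx Hgxa Hg w Hw) as [u [[Hu|Hu] Hwu]].
    + pose proof (geod_dist_start_le _ _ _ _ Hgxa Hu).
      pose proof (dist_triangle x u w). pose proof (dist_triangle x w v).
      rewrite (dist_sym u w), (dist_sym w v) in *. lia.
    + exists u. split; [exact Hu|]. pose proof (dist_triangle v w u). lia.
Qed.

(* Travelling [eps + 1] steps along a geodesic and back is a [1000 delta]-quasi-geodesic
   loop unless [delta] is tiny; stability would put its far end within [eps] of its start. *)
Lemma qg_stability_two_delta_le delta eps l :
  qg_stability d (1000 * delta) eps -> geodesic d l -> eps + 2 <= length l ->
  2 * delta <= eps.
Proof.
  intros Heps Hl Hlen.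
  destruct (le_lt_dec (1000 * delta * (1000 * delta)) (2 * eps + 1)); [nia|exfalso].
  destruct l as [|x0 l'] eqn:El; [simpl in Hlen; lia|]. rewrite <- El in *.
  set (m := S eps). set (z := nth 0 l x0).
  assert (Hq : quasi_geodesic d (1000 * delta) (round_trip l x0 m))
    by (apply round_trip_quasi_geodesic; unfold m; auto; nia).
  assert (Hz : forall i, i = 0 \/ i = 2 * m -> nth_error (round_trip l x0 m) i = Some z).
  { intros i Hi. rewrite nth_error_round_trip by lia. unfold z, absdiff. do 2 f_equal. lia. }
  assert (Hstart : starts (round_trip l x0 m) z) by (apply starts_nth, Hz; left; reflexivity).
  assert (Hend : ends (round_trip l x0 m) z).
  { apply ends_nth. rewrite length_round_trip. split; [unfold round_trip; discriminate|].
    apply Hz. right. lia. }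
  assert (Hgz : geod_from_to d [z] z z).
  { split; [split; [discriminate|]|split; reflexivity].
    intros [|[|i]] [|[|j]] p q Hp Hq'; try discriminate.
    injection Hp as <-. injection Hq' as <-. rewrite (dist_refl z). reflexivity. }
  assert (Hfar : In (nth m l x0) (round_trip l x0 m)).
  { apply nth_error_In with m. rewrite nth_error_round_trip by lia.
    unfold absdiff. do 2 f_equal. lia. }
  destruct (Heps _ _ z z Hq Hstart Hend Hgz _ Hfar) as [w [[<-|[]] Hw]].
  unfold z in Hw. rewrite (proj2 Hl _ _ _ _ (nth_error_nth' l (n := m) x0 ltac:(lia))
                            (nth_error_nth' l (n := 0) x0 ltac:(lia))) in Hw.
  unfold absdiff, m in Hw. lia.
Qed.

Lemma channel_vertex_near_far_point {delta eps k1 L a b x y g2 g v} :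
  hyperbolic d delta -> (forall p q, exists l, geod_from_to d l p q) ->
  qg_stability d (1000 * delta) eps -> 0 < eps -> k1 + 4 * eps <= L ->
  geod_from_to d g2 x y -> length g2 = S (3 * L) ->
  d x a <= 2 * eps -> d y b <= 2 * eps ->
  In v g2 -> L <= d x v -> L <= d y v -> geod_from_to d g a b ->
  exists c, In c g /\ 2 * eps + k1 <= d a c /\ 2 * eps + k1 <= d b c /\ d v c <= 2 * eps.
Proof.
  intros Hhyp Hgeod Heps Heps0 HL Hg2 Hl2 Hxa Hyb Hv Hxv Hyv Hg.
  assert (Hdelta : 2 * delta <= eps)
    by (apply (qg_stability_two_delta_le _ _ g2 Heps (proj1 Hg2)); lia).
  destruct (geod_quadrilateral_thin delta (2 * eps) x y a b g2 g v Hhyp Hgeod Hg2 Hg Hv)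
    as [u [Hu Hvu]]; try lia.
  assert (Hxy : d x y = 3 * L) by (rewrite (geod_dist _ _ _ Hg2), Hl2; lia).
  pose proof (dist_triangle x a v). pose proof (dist_triangle a u v).
  pose proof (dist_triangle y b v). pose proof (dist_triangle b u v).
  pose proof (dist_triangle x a y). pose proof (dist_triangle a b y).
  rewrite (dist_sym u v), (dist_sym b y) in *.
  destruct (geod_far_point g a b u (L - 2 * eps) (2 * delta) Hg Hu) as [c [Hc [Hac [Hbc Huc]]]];
    try lia.
  exists c. pose proof (dist_triangle v u c). repeat split; solve [assumption | lia].
Qed.

End PathMetric.

Lemma channel_vertex {V} {d : V -> V -> nat} {tight eps L a b g1 v} :
  channel d tight eps L a b g1 -> In v g1 ->
  exists x y g2, tight_from_to d tight g2 x y /\ length g2 = S (3 * L) /\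
    d x a <= 2 * eps /\ d y b <= 2 * eps /\ In v g2 /\ L <= d x v /\ L <= d y v.
Proof.
  intros [_ [_ [g2 [x [y [Hg2 [Hl2 [Hxa [Hyb [Hsub [[Hx _] [Hy _]]]]]]]]]]]] Hv.
  exists x, y, g2. auto 8.
Qed.

(* Bowditch's hypothesis with [r = 2 eps] at [c]; it holds of no [v] when [c] is close
   to [a] or [b]. *)
Definition bowditch_cluster {V} (d : V -> V -> nat) (tight : list V -> Prop) (eps k1 : nat)
  (a b c v : V) : Prop :=
  2 * eps + k1 <= d a c /\ 2 * eps + k1 <= d b c /\ d v c <= 2 * eps /\
  exists a' b' g', d a a' <= 2 * eps /\ d b b' <= 2 * eps /\
    tight_from_to d tight g' a' b' /\ In v g'.

Lemma bowditch_cluster_bound {V} {d : V -> V -> nat} {tight eps k1 K1 a b g c} S :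
  bowditch_property d tight eps k1 K1 -> tight_from_to d tight g a b -> In c g ->
  NoDup S -> (forall v, In v S -> bowditch_cluster d tight eps k1 a b c v) -> length S <= K1.
Proof.
  intros Hbow Hg Hc Hnd HS. destruct S as [|v S']; [simpl; lia|].
  destruct (HS v (or_introl eq_refl)) as [Hac [Hbc _]].
  apply (Hbow a b c (2 * eps)); [exists g; auto|exact Hac|exact Hbc|exact Hnd|].
  intros w Hw. destruct (HS w Hw) as [_ [_ [Hwc Hw']]]. auto.
Qed.

Theorem lemma1p8
  (V : Type) (adj : V -> V -> Prop) (d : V -> V -> nat)
  (tight : list V -> Prop) (delta eps k1 K1 : nat)
  (Hd : is_path_metric adj d)
  (Hhyp : hyperbolic d delta)
  (Htight : tight_basic d tight)
  (Heps_pos : 0 < eps)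
  (Heps : qg_stability d (1000 * delta) eps)
  (Hbow : bowditch_property d tight eps k1 K1) :
  forall L : nat, k1 + 4 * eps <= L ->
  exists kappa : nat, forall a b : V, d a b <= 3 * L ->
    forall cs : list (list V), NoDup cs ->
      (forall g1, In g1 cs -> channel d tight eps L a b g1) ->
      length cs <= kappa.
Proof.
  intros L HL. exists (((3 * L + 1) * K1) ^ S L).
  intros a b Hab cs Hnd Hch.
  destruct Htight as [_ [Hex _]].
  assert (Hgeod : forall p q, exists l, geod_from_to d l p q)
    by (intros p q; destruct (Hex p q) as [l [_ Hl]]; eauto).
  destruct (Hex a b) as [g Hg].
  set (U := nodup (fun x y => excluded_middle_informative (x = y)) (concat cs)).
  assert (HU : length U <= (3 * L + 1) * K1).
  { apply Nat.le_trans with (length g * K1);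
      [|apply Nat.mul_le_mono_r; rewrite (geod_dist _ _ _ (proj2 Hg)) in Hab; lia].
    apply (NoDup_length_le_cover (bowditch_cluster d tight eps k1 a b)); [apply NoDup_nodup| |].
    - intros v Hv. apply nodup_In, in_concat in Hv as [g1 [Hg1 Hv]].
      destruct (channel_vertex (Hch g1 Hg1) Hv)
        as [x [y [g2 [Hg2 [Hl2 [Hxa [Hyb [Hv2 [Hxv Hyv]]]]]]]]].
      destruct (channel_vertex_near_far_point Hd Hhyp Hgeod Heps Heps_pos HL
                  (proj2 Hg2) Hl2 Hxa Hyb Hv2 Hxv Hyv (proj2 Hg)) as [c [Hc [Hac [Hbc Hvc]]]].
      exists c. split; [exact Hc|]. do 3 (split; [assumption|]).
      exists x, y, g2. rewrite (dist_sym Hd a x), (dist_sym Hd b y). auto.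
    - intros c S Hc. exact (bowditch_cluster_bound S Hbow Hg Hc). }
  apply Nat.le_trans with (length U ^ S L); [|apply Nat.pow_le_mono_l, HU].
  apply NoDup_words_length_le; [exact Hnd|].
  intros g1 Hg1. split; [apply (Hch g1 Hg1)|].
  intros v Hv. apply nodup_In, in_concat. eauto.
Qed.
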